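(* In every Choi-defined resource theory, the free operations coincide with the completely resource-non-generating operations: a channel $\mathcal{M}_{A\to B}$ is free if and only if for every system $R$ and every free state $\sigma_{AR}$, the state $(\mathcal{M}_{A\to B}\otimes\mathcal{I}_R)(\sigma_{AR})$ is free.
   Context: A quantum resource theory specifies, for all finite-dimensional systems, a set of free channels containing the identity, swap and discarding (partial trace) channels and closed under sequential and parallel composition; free states are those preparable by free channels (so free channels map free states to free states), and the family of free states is closed under tensor product, partial trace and system swaps. For a channel $\mathcal{M}_{A\to B}$ its renormalized Choi matrix is $\frac{1}{d_A}(\mathcal{M}_{A\to B}\otimes\mathcal{I}_{A'})(\Phi_{AA'})$, where $A'$ is a copy of $A$, $d_A=\dim A$ and $\Phi_{AA'}=\sum_{x,y}|x\rangle\langle y|_A\otimes|x\rangle\langle y|_{A'}$ for a fixed orthonormal basis. A Choi-defined resource theory (CDRT) is a resource theory in which a channel is free if and only if its renormalized Choi matrix is a free state. A channel $\mathcal{M}_{A\to B}$ is completely resource-non-generating (CRNG) if $(\mathcal{M}_{A\to B}\otimes\mathcal{I}_R)(\sigma_{AR})$ is free for every system $R$ and every free state $\sigma_{AR}$. *)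

From HB Require Import structures.
From mathcomp Require Import all_boot all_order all_algebra.
From mathcomp Require Import mxtens complex.
From mathcomp Require Import reals.

Set Implicit Arguments.
Unset Strict Implicit.
Unset Printing Implicit Defensive.

Import Order.TTheory GRing.Theory Num.Theory.
Local Open Scope ring_scope.

Section QRT.
Variable C : numClosedFieldType.

(* A system is identified by its (positive) dimension d; operators are 'M[C]_d.
   The composite system A B has dimension dA * dB, with the index convention
   of mxtens (mxtens_index (i, k) for i : 'I_dA, k : 'I_dB), and A *t B is the
   Kronecker/tensor product of matrices. *)

Definition psd n (A : 'M[C]_n) : Prop :=
  forall v : 'cV[C]_n, 0 <= ((map_mx Num.conj v)^T *m A *m v) 0 0.

Definition is_state n (rho : 'M[C]_n) : Prop := psd rho /\ \tr rho = 1.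

Definition tensor_map m1 n1 m2 n2 (M : 'M[C]_m1 -> 'M[C]_n1)
  (N : 'M[C]_m2 -> 'M[C]_n2) (X : 'M[C]_(m1 * m2)) : 'M[C]_(n1 * n2) :=
  \sum_(i < m1) \sum_(j < m1) \sum_(k < m2) \sum_(l < m2)
     X (mxtens_index (i, k)) (mxtens_index (j, l))
       *: (M (delta_mx i j) *t N (delta_mx k l)).

Definition linear_map m n (M : 'M[C]_m -> 'M[C]_n) : Prop :=
  forall (a : C) (X Y : 'M[C]_m), M (a *: X + Y) = a *: M X + M Y.

Definition trace_preserving m n (M : 'M[C]_m -> 'M[C]_n) : Prop :=
  forall X : 'M[C]_m, \tr (M X) = \tr X.

Definition completely_positive m n (M : 'M[C]_m -> 'M[C]_n) : Prop :=
  forall r (X : 'M[C]_(m * r)), psd X -> psd (tensor_map M (@id 'M[C]_r) X).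

Definition is_channel m n (M : 'M[C]_m -> 'M[C]_n) : Prop :=
  [/\ linear_map M, completely_positive M & trace_preserving M].

Definition swap_map m n (X : 'M[C]_(m * n)) : 'M[C]_(n * m) :=
  \sum_(i < m) \sum_(j < m) \sum_(k < n) \sum_(l < n)
     X (mxtens_index (i, k)) (mxtens_index (j, l))
       *: (delta_mx k l *t delta_mx i j).

Definition ptrace2 m n (X : 'M[C]_(m * n)) : 'M[C]_m :=
  \matrix_(i, j) \sum_(k < n) X (mxtens_index (i, k)) (mxtens_index (j, k)).

(* preparation channel of rho from the trivial (1-dimensional) system *)
Definition prep n (rho : 'M[C]_n) (X : 'M[C]_1) : 'M[C]_n := \tr X *: rho.

(* unnormalized maximally entangled operator Phi_{AA'} *)
Definition maxent m : 'M[C]_(m * m) :=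
  \sum_(x < m) \sum_(y < m) (delta_mx x y *t delta_mx x y).

Definition choi m n (M : 'M[C]_m -> 'M[C]_n) : 'M[C]_(n * m) :=
  (m%:R)^-1 *: tensor_map M (@id 'M[C]_m) (maxent m).

Record resource_theory := ResourceTheory {
  is_free : forall m n, ('M[C]_m -> 'M[C]_n) -> Prop;
  free_is_channel : forall m n (M : 'M[C]_m -> 'M[C]_n),
    (0 < m)%N -> (0 < n)%N -> is_free M -> is_channel M;
  free_id : forall m, (0 < m)%N -> is_free (@id 'M[C]_m);
  free_swap : forall m n, (0 < m)%N -> (0 < n)%N -> is_free (@swap_map m n);
  free_ptrace : forall m n, (0 < m)%N -> (0 < n)%N -> is_free (@ptrace2 m n);
  free_comp : forall a b c (M : 'M[C]_a -> 'M[C]_b) (N : 'M[C]_b -> 'M[C]_c),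
    (0 < a)%N -> (0 < b)%N -> (0 < c)%N -> is_free M -> is_free N -> is_free (N \o M);
  free_tens : forall m1 n1 m2 n2 (M : 'M[C]_m1 -> 'M[C]_n1) (N : 'M[C]_m2 -> 'M[C]_n2),
    (0 < m1)%N -> (0 < n1)%N -> (0 < m2)%N -> (0 < n2)%N ->
    is_free M -> is_free N -> is_free (tensor_map M N)
}.

Definition free_state (T : resource_theory) n (rho : 'M[C]_n) : Prop :=
  is_state rho /\ is_free T (prep rho).

Definition choi_defined (T : resource_theory) : Prop :=
  forall m n (M : 'M[C]_m -> 'M[C]_n), (0 < m)%N -> (0 < n)%N -> is_channel M ->
    (is_free T M <-> free_state T (choi M)).

Definition CRNG (T : resource_theory) m n (M : 'M[C]_m -> 'M[C]_n) : Prop :=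
  forall r, (0 < r)%N -> forall sigma : 'M[C]_(m * r),
    free_state T sigma -> free_state T (tensor_map M (@id 'M[C]_r) sigma).

End QRT.

(* A free channel M maps free states to free states even when tensored with an
   identity, because prep ((M (x) id) sigma) is the composite of the free
   channels prep sigma and M (x) id.  Conversely, the identity channel is free,
   so in a Choi-defined theory its Choi state is a free state; M (x) id maps it
   to the Choi state of M, so a CRNG channel has a free Choi state and is
   therefore free. *)
From HB Require Import structures.
From mathcomp Require Import all_boot all_order all_algebra.
From mathcomp Require Import mxtens complex.
From mathcomp Require Import reals.
From Stdlib Require Import FunctionalExtensionality.

Set Implicit Arguments.
Unset Strict Implicit.
Unset Printing Implicit Defensive.
Import Order.TTheory GRing.Theory Num.Theory.
Local Open Scope ring_scope.

Section TensorMap.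
Variable C : numClosedFieldType.

Lemma sum_mxtens_index (V : nmodType) m n (F : 'I_(m * n) -> V) :
  \sum_(p < m * n) F p = \sum_(i < m) \sum_(k < n) F (mxtens_index (i, k)).
Proof.
rewrite pair_big /= (reindex (@mxtens_index m n)) /=; last first.
  by exists (@mxtens_unindex m n) => x _; rewrite (mxtens_indexK, mxtens_unindexK).
by apply: eq_bigr => -[i k] _.
Qed.

Lemma tensmx_delta m n p q (i : 'I_m) (j : 'I_n) (k : 'I_p) (l : 'I_q) :
  delta_mx i j *t delta_mx k l =
  delta_mx (mxtens_index (i, k)) (mxtens_index (j, l)) :> 'M[C]_(m * p, n * q).
Proof.
apply/matrixP => r s.
case: (mxtens_indexP r) => i' k'; case: (mxtens_indexP s) => j' l'.
rewrite tensmxE !mxE !(can_eq (@mxtens_indexK _ _)) !xpair_eqE.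
by do 4 case: eqP => _; rewrite ?mulr0 ?mul0r ?mulr1.
Qed.

Lemma mxtrace_tensmx m n (A : 'M[C]_m) (B : 'M[C]_n) :
  \tr (A *t B) = \tr A * \tr B.
Proof. by rewrite /mxtrace mulr_sum; apply: eq_bigr => p _; rewrite mxE. Qed.

Lemma tensor_mapZ m1 n1 m2 n2 (M : 'M[C]_m1 -> 'M[C]_n1)
  (N : 'M[C]_m2 -> 'M[C]_n2) (a : C) (X : 'M[C]_(m1 * m2)) :
  tensor_map M N (a *: X) = a *: tensor_map M N X.
Proof.
rewrite /tensor_map scaler_sumr; apply: eq_bigr => i _.
rewrite scaler_sumr; apply: eq_bigr => j _.
rewrite scaler_sumr; apply: eq_bigr => k _.
rewrite scaler_sumr; apply: eq_bigr => l _.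
by rewrite mxE scalerA.
Qed.

Lemma tensor_map_id_id m r (X : 'M[C]_(m * r)) :
  tensor_map (@id 'M[C]_m) (@id 'M[C]_r) X = X.
Proof.
rewrite [RHS]matrix_sum_delta (@sum_mxtens_index _ m r) /tensor_map.
apply: eq_bigr => i _; rewrite exchange_big; apply: eq_bigr => k _.
rewrite (@sum_mxtens_index _ m r).
apply: eq_bigr => j _; apply: eq_bigr => l _.
by rewrite tensmx_delta.
Qed.

Lemma mxtrace_tensor_map m1 n1 m2 n2 (M : 'M[C]_m1 -> 'M[C]_n1)
  (N : 'M[C]_m2 -> 'M[C]_n2) (X : 'M[C]_(m1 * m2)) :
  \tr (tensor_map M N X) =
  \sum_(i < m1) \sum_(j < m1) \sum_(k < m2) \sum_(l < m2)
     X (mxtens_index (i, k)) (mxtens_index (j, l))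
       * (\tr (M (delta_mx i j)) * \tr (N (delta_mx k l))).
Proof.
rewrite /tensor_map raddf_sum; apply: eq_bigr => i _.
rewrite raddf_sum; apply: eq_bigr => j _.
rewrite raddf_sum; apply: eq_bigr => k _.
rewrite raddf_sum; apply: eq_bigr => l _.
by rewrite /= mxtraceZ mxtrace_tensmx.
Qed.

Lemma trace_preserving_tensor_map m1 n1 m2 n2 (M : 'M[C]_m1 -> 'M[C]_n1)
  (N : 'M[C]_m2 -> 'M[C]_n2) :
  trace_preserving M -> trace_preserving N -> trace_preserving (tensor_map M N).
Proof.
move=> tpM tpN X; rewrite -{2}[X]tensor_map_id_id !mxtrace_tensor_map.
apply: eq_bigr => i _; apply: eq_bigr => j _.
apply: eq_bigr => k _; apply: eq_bigr => l _.
by rewrite tpM tpN.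
Qed.

Lemma choi_tensor_map_id m n (M : 'M[C]_m -> 'M[C]_n) :
  tensor_map M (@id 'M[C]_m) (choi (@id 'M[C]_m)) = choi M.
Proof. by rewrite /choi tensor_map_id_id tensor_mapZ. Qed.

Lemma is_state_tensor_map_id m n r (M : 'M[C]_m -> 'M[C]_n) (sigma : 'M[C]_(m * r)) :
  is_channel M -> is_state sigma -> is_state (tensor_map M (@id 'M[C]_r) sigma).
Proof.
case=> _ cpM tpM [psd_sigma tr_sigma]; split; first exact: cpM.
by rewrite (trace_preserving_tensor_map tpM (fun _ => erefl)).
Qed.

Lemma prep_comp n k (F : 'M[C]_n -> 'M[C]_k) (rho : 'M[C]_n) :
  (forall a X, F (a *: X) = a *: F X) -> prep (F rho) = F \o prep rho.
Proof. by move=> FZ; apply: functional_extensionality => X; rewrite /= FZ. Qed.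

End TensorMap.

Section ResourceTheory.
Variables (C : numClosedFieldType) (T : resource_theory C).

Lemma free_tensor_map_id m n r (M : 'M[C]_m -> 'M[C]_n) :
  (0 < m)%N -> (0 < n)%N -> (0 < r)%N ->
  is_free T M -> is_free T (tensor_map M (@id 'M[C]_r)).
Proof. by move=> hm hn hr fM; apply: free_tens => //; apply: free_id. Qed.

Lemma free_CRNG m n (M : 'M[C]_m -> 'M[C]_n) :
  (0 < m)%N -> (0 < n)%N -> is_free T M -> CRNG T M.
Proof.
move=> hm hn fM r hr sigma [st_sigma free_sigma]; split.
  exact: is_state_tensor_map_id (free_is_channel hm hn fM) st_sigma.
rewrite prep_comp; last exact: tensor_mapZ.
apply: free_comp; rewrite ?muln_gt0 ?hm ?hn ?hr //.
exact: free_tensor_map_id.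
Qed.

Lemma free_state_choi_id m :
  choi_defined T -> (0 < m)%N -> free_state T (choi (@id 'M[C]_m)).
Proof.
move=> hC hm; have fid := free_id T hm.
exact: (hC _ _ _ hm hm (free_is_channel hm hm fid)).1 fid.
Qed.

Lemma CRNG_free_state_choi m n (M : 'M[C]_m -> 'M[C]_n) :
  choi_defined T -> (0 < m)%N -> CRNG T M -> free_state T (choi M).
Proof.
move=> hC hm crngM; rewrite -choi_tensor_map_id.
exact: crngM hm _ (free_state_choi_id hC hm).
Qed.

End ResourceTheory.

Theorem theorem2 (R : realType) (T : resource_theory R[i]) :
  choi_defined T ->
  forall (dA dB : nat) (M : 'M[R[i]]_dA -> 'M[R[i]]_dB),
    (0 < dA)%N -> (0 < dB)%N -> is_channel M ->
    (is_free T M <-> CRNG T M).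
Proof.
move=> hC dA dB M hA hB chM; split; first exact: free_CRNG.
by move=> crngM; apply/(hC _ _ M hA hB chM); exact: CRNG_free_state_choi.
Qed.
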